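(* Let $X$ and $Y$ be topological spaces with $Y$ compact, and let $f:\mathrm{Closed}(X)\to\mathrm{Closed}(Y)$ be admissible. Then $X+_fY$ is compact if and only if $f(A)\neq\emptyset$ for every non-compact $A\in\mathrm{Closed}(X)$.
   Context: $\mathrm{Closed}(X)$ is the set of closed subsets of $X$. $f$ is admissible if $f(\emptyset)=\emptyset$ and $f$ preserves finite unions. $X+_fY$ is $X\sqcup Y$ with closed sets the $D$ such that $D\cap X$ is closed in $X$, $D\cap Y$ is closed in $Y$ and $f(D\cap X)\subseteq D$. *)

From HB Require Import structures.
From mathcomp Require Import all_boot all_order all_algebra.
From mathcomp Require Import all_classical all_reals all_analysis.
Set Implicit Arguments. Unset Strict Implicit. Unset Printing Implicit Defensive.
Import Order.TTheory GRing.Theory Num.Theory.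
Local Open Scope classical_set_scope.

(* An admissible map f : Closed(X) -> Closed(Y): represented as a function on
   all subsets, of which only the values on closed sets matter. *)
Record admissible (X Y : topologicalType) := Admissible {
  adm_fun :> set X -> set Y;
  adm_closed : forall A, closed A -> closed (adm_fun A);
  adm_set0 : adm_fun set0 = set0;
  adm_setU : forall A B, closed A -> closed B ->
     adm_fun (A `|` B) = adm_fun A `|` adm_fun B
}.

(* Carrier of X +_f Y: the disjoint union X \sqcup Y (depends on f only
   through the topology it will carry). *)
Definition sumf (X Y : topologicalType) (f : admissible X Y) : Type :=
  (X + Y)%type.

Section SumF.
Context (X Y : topologicalType) (f : admissible X Y).

Definition sumf_closed (D : set (X + Y)%type) : Prop :=
  [/\ closed (inl @^-1` D), closed (inr @^-1` D) & f (inl @^-1` D) `<=` inr @^-1` D].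

Lemma adm_mono (A B : set X) : closed A -> closed B -> A `<=` B -> f A `<=` f B.
Proof.
move=> cA cB AB; have -> : B = A `|` B by rewrite setUidr.
by rewrite adm_setU //; exact: subsetUl.
Qed.

HB.instance Definition _ := Choice.on (sumf f).

Let op (U : set (sumf f)) := sumf_closed (~` U).

Let opT : op setT.
Proof.
rewrite /op setCT /sumf_closed !preimage_set0; split; try exact: closed0.
by rewrite adm_set0.
Qed.

Let opI : setI_closed op.
Proof.
move=> A B [cA1 cA2 fA] [cB1 cB2 fB]; rewrite /op setCI /sumf_closed !preimage_setU.
split; try exact: closedU.
by rewrite adm_setU //; exact: setUSS.
Qed.

Let op_bigU (I : Type) (g : I -> set (sumf f)) : (forall i, op (g i)) ->
    op (\bigcup_i g i).
Proof.
move=> og; rewrite /op setC_bigcup /sumf_closed !preimage_bigcap.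
have c1 : closed (\bigcap_i (inl @^-1` (~` g i))).
  by apply: closed_bigI => i _; have [] := og i.
split => //.
  by apply: closed_bigI => i _; have [] := og i.
move=> y fy i _.
have [ci _ fi] := og i; apply: fi.
by apply: (adm_mono c1 ci) fy => x; apply.
Qed.

HB.instance Definition _ := isOpenTopological.Build (sumf f) opT opI op_bigU.

End SumF.

From mathcomp Require Import all_boot all_order all_algebra.
From mathcomp Require Import all_classical all_reals all_analysis.
Local Open Scope classical_set_scope.

(* If [f A = set0] for a closed [A], then [inl @` A] is closed in [X +_f Y],
   hence compact; compactness transfers back to [A] because every closed [C]
   of [X] is the trace of the closed set [inl @` C `|` inr @` f C].
   Conversely, let [F] be a proper filter on [X +_f Y]. If the closure of some
   member of [F] misses [Y], its trace [K] on [X] is closed with [f K = set0],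
   hence compact, and [F] clusters in [inl @` K]. Otherwise the traces on [Y]
   of the closures of the members of [F] form a proper filter base on the
   compact space [Y], whose cluster point is one of [F]. *)

Section CompactTransfer.
Context {T U : topologicalType}.

Lemma compact_image_reflect {g : T -> U} {A : set T} :
  (forall C, closed C -> exists2 D, closed D & g @^-1` D = C) ->
  compact (g @` A) -> compact A.
Proof.
move=> closed_preimage cgA F PF FA.
have PgF : ProperFilter (g @ F) by exact: fmap_proper_filter.
have gFA : F (g @^-1` (g @` A)) by apply: filterS FA => x Ax; exists x.
have [_ [[x Ax <-] clx]] := cgA _ PgF gFA.
exists x; split => //; rewrite clusterE => B FB.
have [D cD gD] := closed_preimage (closure B) (@closed_closure _ B).
rewrite -gD; apply: cD; move: clx; rewrite clusterE; apply.
by rewrite /= /fmap /= gD; apply: filterS FB; exact: subset_closure.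
Qed.

Lemma continuous_compact_cluster {g : T -> U} {K : set T} {F : set_system U} :
  continuous g -> compact K -> ProperFilter F ->
  (forall B, F B -> K `&` g @^-1` closure B !=set0) ->
  exists2 x, K x & cluster F (g x).
Proof.
move=> cg cK PF meetK.
pose G := filter_from F (fun B => K `&` g @^-1` closure B).
have FG : Filter G.
  apply: filter_from_filter; first by exists setT; exact: filterT.
  move=> B1 B2 FB1 FB2; exists (B1 `&` B2); first exact: filterI.
  by move=> x [Kx /= clx]; do 2 split => //; apply: closureS clx => ? [].
have PG : ProperFilter G by exact: filter_from_proper.
have GK : G K by exists setT; [exact: filterT | exact: subIsetl].
have [x [Kx clx]] := cK G PG GK.
exists x => //; rewrite clusterE => B FB.
have cB : closed (g @^-1` closure B).
  by move/continuous_closedP: cg; apply; exact: closed_closure.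
have : closure (K `&` g @^-1` closure B) x.
  by move: clx; rewrite clusterE; apply; exists B.
by move=> /(closureS (@subIsetr _ K _)) /cB.
Qed.

End CompactTransfer.

Section SumImages.
Context (A B : Type) (SA : set A) (SB : set B).

Lemma preimage_inl_images : inl @^-1` (inl @` SA `|` inr @` SB) = SA.
Proof.
by apply/seteqP; split => [x [[y Ay [<-]]|[y _ //]] //|x Ax]; left; exists x.
Qed.

Lemma preimage_inr_images : inr @^-1` (inl @` SA `|` inr @` SB) = SB.
Proof.
by apply/seteqP; split => [x [[y _ //]|[y By [<-]]] //|x Bx]; right; exists x.
Qed.

End SumImages.

Section SumfTopology.
Context {X Y : topologicalType} (f : admissible X Y).

Lemma closed_sumfP (D : set (sumf f)) : closed D <-> sumf_closed f D.
Proof.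
by rewrite -openC; change (sumf_closed f (~` ~` D) <-> sumf_closed f D); rewrite setCK.
Qed.

Lemma sumf_inl_continuous : continuous (inl : X -> sumf f).
Proof. by apply/continuous_closedP => D /closed_sumfP []. Qed.

Lemma sumf_inr_continuous : continuous (inr : Y -> sumf f).
Proof. by apply/continuous_closedP => D /closed_sumfP []. Qed.

Lemma closed_sumf_images (A : set X) (B : set Y) :
  closed A -> closed B -> f A `<=` B ->
  closed (inl @` A `|` inr @` B : set (sumf f)).
Proof.
by move=> cA cB fAB; apply/closed_sumfP; rewrite /sumf_closed
  preimage_inl_images preimage_inr_images.
Qed.

Lemma sumf_closed_hull (C : set X) : closed C ->
  exists2 D : set (sumf f), closed D & (inl : X -> sumf f) @^-1` D = C.
Proof.
move=> cC; exists (inl @` C `|` inr @` f C); last exact: preimage_inl_images.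
by apply: closed_sumf_images => //; exact: adm_closed.
Qed.

Lemma closed_sumf_inl_image (A : set X) :
  closed A -> f A = set0 -> closed (inl @` A : set (sumf f)).
Proof.
move=> cA fA0; rewrite -[_ @` A]setU0 -(image_set0 inr).
by apply: closed_sumf_images => //; [exact: closed0 | rewrite fA0].
Qed.

Lemma sumf_cluster_inl {F : set_system (sumf f)} {B0 : set (sumf f)} :
  ProperFilter F -> F B0 -> inr @^-1` closure B0 = set0 ->
  compact (inl @^-1` closure B0) -> exists x, cluster F (inl x).
Proof.
move=> PF FB0 B0Y cptK.
have meetK B : F B -> inl @^-1` closure B0 `&` inl @^-1` closure B !=set0.
  move=> FB; have [[x|y] [B0z Bz]] := filter_ex (filterI FB0 FB).
    by exists x; split; exact: subset_closure.
  have : (inr @^-1` closure B0) y by exact: subset_closure.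
  by rewrite B0Y.
have [x _ clx] := continuous_compact_cluster sumf_inl_continuous cptK PF meetK.
by exists x.
Qed.

End SumfTopology.

Theorem mainTheorem12 (X Y : topologicalType) (f : admissible X Y) :
  compact [set: Y] ->
  (compact [set: sumf f] <->
   forall A : set X, closed A -> ~ compact A -> f A <> set0).
Proof.
move=> cY; split.
- move=> cS A cA ncA fA0; apply: ncA.
  apply: (compact_image_reflect (sumf_closed_hull f)).
  by apply: (subclosed_compact _ cS) => //; exact: closed_sumf_inl_image.
- move=> fne F PF _.
  have [[B0 FB0 B0Y]|noB0] :=
    pselect (exists2 B, F B & inr @^-1` closure B = set0 :> set Y).
  + have [cK _ fK] := (closed_sumfP f (closure B0)).1 (@closed_closure _ B0).
    have cptK : compact (inl @^-1` closure B0).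
      apply: contrapT => ncK; apply: (fne _ cK ncK).
      by rewrite -subset0 -B0Y.
    have [x clx] := sumf_cluster_inl f PF FB0 B0Y cptK.
    by exists (inl x).
  + have meetY B : F B -> [set: Y] `&` inr @^-1` closure B !=set0.
      move=> FB; rewrite setTI; apply/set0P/negP => /eqP B0; apply: noB0.
      by exists B.
    have [y _ cly] :=
      continuous_compact_cluster (sumf_inr_continuous f) cY PF meetY.
    by exists (inr y).
Qed.
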